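(* Let $(A,\triangleright,\triangleleft,\alpha)$ be a Hom-$L$-dendriform algebra. Define $x\cdot y=x\triangleright y+x\triangleleft y$ and $x\ast y=x\triangleright y-y\triangleleft x$ for $x,y\in A$. Then $(A,\cdot,\alpha)$ and $(A,\ast,\alpha)$ are both Hom-preLie algebras.
   Context: A Hom-$L$-dendriform algebra is a vector space $A$ with bilinear maps $\triangleleft,\triangleright:A\otimes A\to A$ and a linear map $\alpha:A\to A$ such that for all $x,y,z\in A$: $\alpha(x)\triangleright(y\triangleright z)=(x\triangleright y)\triangleright\alpha(z)+(x\triangleleft y)\triangleright\alpha(z)+\alpha(y)\triangleright(x\triangleright z)-(y\triangleleft x)\triangleright\alpha(z)-(y\triangleright x)\triangleright\alpha(z)$ and $\alpha(x)\triangleright(y\triangleleft z)=(x\triangleright y)\triangleleft\alpha(z)+\alpha(y)\triangleleft(x\triangleright z)+\alpha(y)\triangleleft(x\triangleleft z)-(y\triangleleft x)\triangleleft\alpha(z)$. A Hom-preLie algebra is a vector space $S$ with a bilinear product $\cdot$ and linear $\alpha$ such that $(x\cdot y)\cdot\alpha(z)-\alpha(x)\cdot(y\cdot z)=(y\cdot x)\cdot\alpha(z)-\alpha(y)\cdot(x\cdot z)$ for all $x,y,z$. *)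

From mathcomp Require Import all_boot all_order all_algebra.
Set Implicit Arguments. Unset Strict Implicit. Unset Printing Implicit Defensive.
Import GRing.Theory.
Local Open Scope ring_scope.

Definition bilinear_op (K : fieldType) (V : lmodType K) (m : V -> V -> V) : Prop :=
  (forall a : K, forall x y z : V, m (a *: x + y) z = a *: m x z + m y z) /\
  (forall a : K, forall x y z : V, m x (a *: y + z) = a *: m x y + m x z).

Definition linear_map (K : fieldType) (V : lmodType K) (f : V -> V) : Prop :=
  forall a : K, forall x y : V, f (a *: x + y) = a *: f x + f y.

Definition is_HomLDendriform (K : fieldType) (A : lmodType K)
    (rr ll : A -> A -> A) (alpha : A -> A) : Prop :=
  [/\ bilinear_op rr, bilinear_op ll, linear_map alpha,
   (forall x y z : A,
      rr (alpha x) (rr y z) =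
        rr (rr x y) (alpha z) + rr (ll x y) (alpha z) + rr (alpha y) (rr x z)
        - rr (ll y x) (alpha z) - rr (rr y x) (alpha z)) &
   (forall x y z : A,
      rr (alpha x) (ll y z) =
        ll (rr x y) (alpha z) + ll (alpha y) (rr x z) + ll (alpha y) (ll x z)
        - ll (ll y x) (alpha z))].

Definition is_HomPreLie (K : fieldType) (S : lmodType K)
    (m : S -> S -> S) (alpha : S -> S) : Prop :=
  [/\ bilinear_op m, linear_map alpha &
   forall x y z : S,
     m (m x y) (alpha z) - m (alpha x) (m y z) =
     m (m y x) (alpha z) - m (alpha y) (m x z)].

(* With [x, y] := x·y − y·x, which also equals x∗y − y∗x, the two
   Hom-L-dendriform axioms can be rewritten as
     α(x) ▷ (y ▷ z) − α(y) ▷ (x ▷ z) = [x, y] ▷ α(z),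
     α(x) ▷ (y ◁ z) = (x ∗ y) ◁ α(z) + α(y) ◁ (x · z).
   The Hom-preLie identity for a product m is equivalent to
     m(m(x, y) − m(y, x), α(z)) = m(α(x), m(y, z)) − m(α(y), m(x, z)).
   Expanding its right-hand side for m = · or m = ∗ with the rewritten axioms
   leaves [x, y] ▷ α(z) plus terms that either are symmetric in x, y and cancel,
   or combine into [x, y] ◁ α(z), resp. − α(z) ◁ [x, y]. *)

From mathcomp Require Import all_boot all_order all_algebra.
Set Implicit Arguments. Unset Strict Implicit. Unset Printing Implicit Defensive.
Import GRing.Theory.
Local Open Scope ring_scope.

(* Closes an identity in an abelian group whose two sides agree up to
   reordering and cancellation of syntactically equal terms. *)
Ltac zmod_cancel :=
  apply/eqP; rewrite -subr_eq0; apply/eqP;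
  rewrite ?opprD ?opprK ?addrA -[LHS]add0r ?addrA;
  repeat match goal with
  | |- context [- ?a] => rewrite ?(addrAC _ a) ?(addrAC _ (- a)) addrK
  end; done.

Section BilinearOp.
Variables (K : fieldType) (V : lmodType K).
Implicit Types m : V -> V -> V.

Lemma bilinear_opD m1 m2 : bilinear_op m1 -> bilinear_op m2 ->
  bilinear_op (fun x y => m1 x y + m2 x y).
Proof.
by move=> [m1l m1r] [m2l m2r]; split=> a x y z;
  rewrite ?m1l ?m2l ?m1r ?m2r scalerDr addrACA.
Qed.

Lemma bilinear_opN m : bilinear_op m -> bilinear_op (fun x y => - m x y).
Proof. by move=> [ml mr]; split=> a x y z; rewrite ?ml ?mr opprD scalerN. Qed.

Lemma bilinear_op_flip m : bilinear_op m -> bilinear_op (fun x y => m y x).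
Proof. by move=> [ml mr]; split=> a x y z; [exact: mr | exact: ml]. Qed.

Variables (m : V -> V -> V) (alpha : V -> V).
Hypothesis hm : bilinear_op m.

Lemma bilinear_opDl x y z : m (x + y) z = m x z + m y z.
Proof. by have [ml _] := hm; have := ml 1 x y z; rewrite !scale1r. Qed.

Lemma bilinear_opDr x y z : m x (y + z) = m x y + m x z.
Proof. by have [_ mr] := hm; have := mr 1 x y z; rewrite !scale1r. Qed.

Lemma bilinear_opNl x z : m (- x) z = - m x z.
Proof.
have [ml _] := hm; have m0l : m 0 z = 0.
  by have := ml (-1) x x z; rewrite !scaleN1r !addNr.
by have := ml (-1) x 0 z; rewrite m0l !addr0 !scaleN1r.
Qed.

Lemma bilinear_opNr x z : m x (- z) = - m x z.
Proof.
have [_ mr] := hm; have m0r : m x 0 = 0.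
  by have := mr (-1) x z z; rewrite !scaleN1r !addNr.
by have := mr (-1) x z 0; rewrite m0r !addr0 !scaleN1r.
Qed.

Lemma bilinear_opBl x y z : m (x - y) z = m x z - m y z.
Proof. by rewrite bilinear_opDl bilinear_opNl. Qed.

Lemma bilinear_opBr x y z : m x (y - z) = m x y - m x z.
Proof. by rewrite bilinear_opDr bilinear_opNr. Qed.

Lemma is_HomPreLie_commutator : linear_map alpha ->
  (forall x y z, m (m x y - m y x) (alpha z) =
                 m (alpha x) (m y z) - m (alpha y) (m x z)) ->
  is_HomPreLie m alpha.
Proof.
move=> ha hcomm; split=> // x y z.
have := hcomm x y z; rewrite bilinear_opBl => /eqP; rewrite subr_eq => /eqP ->.
zmod_cancel.
Qed.
End BilinearOp.

Section HomLDendriform.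
Variables (K : fieldType) (A : lmodType K) (rr ll : A -> A -> A) (alpha : A -> A).

Definition horizontal_prod x y := rr x y + ll x y.
Definition vertical_prod x y := rr x y - ll y x.

Hypotheses (hr : bilinear_op rr) (hl : bilinear_op ll).
Hypothesis rr_alpha_rr : forall x y z : A,
  rr (alpha x) (rr y z) =
    rr (rr x y) (alpha z) + rr (ll x y) (alpha z) + rr (alpha y) (rr x z)
    - rr (ll y x) (alpha z) - rr (rr y x) (alpha z).
Hypothesis rr_alpha_ll : forall x y z : A,
  rr (alpha x) (ll y z) =
    ll (rr x y) (alpha z) + ll (alpha y) (rr x z) + ll (alpha y) (ll x z)
    - ll (ll y x) (alpha z).

Local Notation hor := horizontal_prod.
Local Notation ver := vertical_prod.

Lemma horizontal_vertical_commutator x y :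
  hor x y - hor y x = ver x y - ver y x.
Proof. rewrite /horizontal_prod /vertical_prod; zmod_cancel. Qed.

Lemma rr_alpha_rr_antisym x y z :
  rr (alpha x) (rr y z) - rr (alpha y) (rr x z) =
  rr (hor x y - hor y x) (alpha z).
Proof.
rewrite {1}rr_alpha_rr /horizontal_prod (bilinear_opBl hr) !(bilinear_opDl hr).
zmod_cancel.
Qed.

Lemma rr_alpha_ll_split x y z :
  rr (alpha x) (ll y z) = ll (ver x y) (alpha z) + ll (alpha y) (hor x z).
Proof.
rewrite rr_alpha_ll /vertical_prod /horizontal_prod.
rewrite (bilinear_opBl hl) (bilinear_opDr hl).
zmod_cancel.
Qed.

Lemma horizontal_hom_prelie_comm x y z :
  hor (hor x y - hor y x) (alpha z) =
  hor (alpha x) (hor y z) - hor (alpha y) (hor x z).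
Proof.
rewrite {1}/horizontal_prod -rr_alpha_rr_antisym.
rewrite horizontal_vertical_commutator (bilinear_opBl hl).
rewrite [hor (alpha x) _]/horizontal_prod [hor (alpha y) _]/horizontal_prod.
rewrite !(bilinear_opDr hr) !rr_alpha_ll_split /horizontal_prod /vertical_prod.
zmod_cancel.
Qed.

Lemma vertical_alpha_assoc x y z :
  ver (alpha x) (ver y z) = rr (alpha x) (rr y z) - ll (alpha z) (hor x y)
    - (ll (ver x z) (alpha y) + ll (ver y z) (alpha x)).
Proof.
rewrite [ver (alpha x) _]/vertical_prod (bilinear_opBr hr) rr_alpha_ll_split.
rewrite /vertical_prod; zmod_cancel.
Qed.

Lemma vertical_hom_prelie_comm x y z :
  ver (ver x y - ver y x) (alpha z) =
  ver (alpha x) (ver y z) - ver (alpha y) (ver x z).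
Proof.
rewrite -horizontal_vertical_commutator {1}/vertical_prod -rr_alpha_rr_antisym.
rewrite (bilinear_opBr hl).
rewrite !vertical_alpha_assoc; zmod_cancel.
Qed.

End HomLDendriform.

Theorem mainTheorem11 (K : fieldType) (A : lmodType K)
    (rr ll : A -> A -> A) (alpha : A -> A) :
  is_HomLDendriform rr ll alpha ->
  is_HomPreLie (fun x y => rr x y + ll x y) alpha /\
  is_HomPreLie (fun x y => rr x y - ll y x) alpha.
Proof.
case=> hr hl ha rr_alpha_rr rr_alpha_ll; split.
- apply: (is_HomPreLie_commutator (bilinear_opD hr hl) ha).
  exact: horizontal_hom_prelie_comm hr hl rr_alpha_rr rr_alpha_ll.
- have hv := bilinear_opD hr (bilinear_opN (bilinear_op_flip hl)).
  apply: (is_HomPreLie_commutator hv ha).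
  exact: vertical_hom_prelie_comm hr hl rr_alpha_rr rr_alpha_ll.
Qed.
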